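(* For every positive integer $n$, let $\Lambda_n$ be the set of sequences $w=w_0w_1\cdots w_n\in\{0,1\}^{n+1}$ with $w_0=0$ and $w_n=1$. There exists a bijection $\lambda\mapsto w(\lambda)=w_0w_1\cdots w_n$ from $\mathcal{H}_n$ to $\Lambda_n$ such that for every $\lambda\in\mathcal{H}_n$: $$\ell(\lambda)=|\{1\le i\le n: w_i=1\}|,\qquad \mathrm{rep}(\lambda)=|\{1\le i\le n: w_i=w_{i-1}=1\}|,$$ $$\mathrm{even}(\lambda)=|\{1\le i\le n: w_i=1 \text{ and } |\{0\le j<i: w_j=0\}| \text{ is even}\}|.$$
   Context: A partition is a finite nonempty weakly decreasing sequence $\lambda=(\lambda_1,\ldots,\lambda_k)$ of positive integers; $\ell(\lambda)=k$. The perimeter is $\Gamma(\lambda)=\lambda_1+\ell(\lambda)-1$; $\mathcal{H}_n$ is the set of partitions with perimeter $n$. $\mathrm{rep}(\lambda)=|\{1\le i\le \ell(\lambda)-1:\lambda_i=\lambda_{i+1}\}|$ and $\mathrm{even}(\lambda)=|\{1\le i\le\ell(\lambda):\lambda_i\text{ even}\}|$. *)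

From mathcomp Require Import all_boot.
Set Implicit Arguments. Unset Strict Implicit. Unset Printing Implicit Defensive.

(* A partition: finite nonempty weakly decreasing sequence of positive integers,
   stored as lambda_1 :: lambda_2 :: ... :: lambda_k (0-indexed in the seq). *)
Definition is_partition (l : seq nat) : bool :=
  [&& l != [::], all (fun x => 0 < x) l & sorted geq l].

Definition ell (l : seq nat) : nat := size l.

Definition perimeter (l : seq nat) : nat := head 0 l + size l - 1.

Definition inH (n : nat) (l : seq nat) : bool := is_partition l && (perimeter l == n).

(* rep(lambda) = #{1 <= i <= ell-1 : lambda_i = lambda_{i+1}} (0-indexed: i and i+1) *)
Definition rep (l : seq nat) : nat :=
  \sum_(0 <= i < (size l).-1) (nth 0 l i == nth 0 l i.+1).

Definition even_parts (l : seq nat) : nat := count (fun x => ~~ odd x) l.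

(* Lambda_n : words w_0 ... w_n in {0,1}^{n+1} with w_0 = 0, w_n = 1
   (bits encoded as booleans, 1 = true). *)
Definition inLambda (n : nat) (w : seq bool) : bool :=
  [&& size w == n.+1, nth true w 0 == false & nth false w n].

Definition w_ones (n : nat) (w : seq bool) : nat :=
  \sum_(1 <= i < n.+1) nth false w i.

Definition w_double_ones (n : nat) (w : seq bool) : nat :=
  \sum_(1 <= i < n.+1) (nth false w i && nth false w i.-1).

Definition w_even_ones (n : nat) (w : seq bool) : nat :=
  \sum_(1 <= i < n.+1) (nth false w i && ~~ odd (count negb (take i w))).

From mathcomp Require Import all_boot zify.
Set Implicit Arguments. Unset Strict Implicit. Unset Printing Implicit Defensive.

(* Read the parts of lambda from the smallest to the largest: w(lambda) starts
   with a 0 and, for each part lambda_i, appends lambda_i - lambda_(i+1) zeros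
   followed by a 1 (with lambda_(l+1) := 1).  This is the boundary path of the
   Young diagram: it has l(lambda) ones and lambda_1 zeros, hence length
   Gamma(lambda) + 1, and each part is the number of zeros preceding its 1.
   So two adjacent ones are two equal consecutive parts, a 1 preceded by an
   even number of zeros is an even part, counting zeros decodes w, and every
   word 0...1 splits into such blocks. *)

Definition pos_nonincr (l : seq nat) : bool := all (fun x => 0 < x) l && sorted geq l.

Lemma pos_nonincr_cons x l :
  pos_nonincr (x :: l) = (head 1 l <= x) && pos_nonincr l.
Proof.
case: l => [|y l]; rewrite /pos_nonincr /= ?andbT //.
by case: x => [|x]; case: y => [|y]; rewrite //= ?andbF // andbCA andbA.
Qed.

Definition block (k : nat) : seq bool := rcons (nseq k false) true.

Fixpoint word_of_part (l : seq nat) : seq bool :=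
  if l is x :: l' then word_of_part l' ++ block (x - head 1 l') else [:: false].

Fixpoint part_of_word (c : nat) (acc : seq nat) (w : seq bool) : seq nat :=
  if w is b :: w' then
    if b then part_of_word c (c :: acc) w' else part_of_word c.+1 acc w'
  else acc.

Lemma size_block k : size (block k) = k.+1.
Proof. by rewrite /block size_rcons size_nseq. Qed.

Lemma count_block k : count negb (block k) = k.
Proof. by rewrite /block -cats1 count_cat count_nseq /=; lia. Qed.

Lemma nth_block k i : nth false (block k) i = (i == k).
Proof.
rewrite /block nth_rcons size_nseq nth_nseq.
by case: ltngtP => //; rewrite if_same.
Qed.

Lemma nth_cat_block u k i :
  nth false (u ++ block k) (size u + i) = (i == k).
Proof. by rewrite nth_cat ltnNge leq_addr /= addKn nth_block. Qed.

Lemma take_cat_block u k : take (size u + k) (u ++ block k) = u ++ nseq k false.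
Proof.
rewrite take_cat ltnNge leq_addr /= addKn /block -cats1.
by rewrite take_cat size_nseq ltnn subnn take0 cats0.
Qed.

Lemma head_word_of_part l : head true (word_of_part l) = false.
Proof. by elim: l => //= x l; case: (word_of_part l). Qed.

Lemma size_word_of_part_gt0 l : 0 < size (word_of_part l).
Proof. by case: (word_of_part l) (head_word_of_part l). Qed.

Lemma last_word_of_part l : last false (word_of_part l) = (l != [::]).
Proof. by case: l => //= x l; rewrite last_cat last_rcons. Qed.

Lemma size_word_of_part l :
  pos_nonincr l -> size (word_of_part l) = head 1 l + size l.
Proof.
elim: l => //= x l IH; rewrite pos_nonincr_cons => /andP [hx /IH {}IH].
by rewrite size_cat size_block IH; lia.
Qed.

Lemma count_word_of_part l :
  pos_nonincr l -> count negb (word_of_part l) = head 1 l.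
Proof.
elim: l => //= x l IH; rewrite pos_nonincr_cons => /andP [hx /IH {}IH].
by rewrite count_cat count_block IH; lia.
Qed.

Lemma part_of_word_cat c acc u v :
  part_of_word c acc (u ++ v) = part_of_word (c + count negb u) (part_of_word c acc u) v.
Proof.
by elim: u c acc => [|[] u IH] c acc /=; rewrite ?addn0 // IH ?addSnnS.
Qed.

Lemma part_of_word_block c acc k : part_of_word c acc (block k) = (c + k) :: acc.
Proof. by elim: k c => [|k IH] c /=; rewrite ?addn0 // IH addSnnS. Qed.

Lemma word_of_partK l : pos_nonincr l -> part_of_word 0 [::] (word_of_part l) = l.
Proof.
elim: l => //= x l IH; rewrite pos_nonincr_cons => /andP [hx gl].
by rewrite part_of_word_cat IH // part_of_word_block count_word_of_part // subnKC.
Qed.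

Lemma word_of_part_onto w : head true w = false ->
  exists l k, pos_nonincr l /\ w = word_of_part l ++ nseq k false.
Proof.
elim/last_ind: w => // v b IH.
case: v IH => [|y v] IH; first by move=> /= ->; exists [::], 0.
move=> /IH [l [k [gl ->]]]; rewrite rcons_cat; case: b.
  exists ((head 1 l + k) :: l), 0.
  by rewrite pos_nonincr_cons leq_addr gl /= cats0 addKn.
by exists l, k.+1; split=> //; congr (_ ++ _); elim: k {IH} => //= k ->.
Qed.

Definition stat (P : seq bool -> nat -> bool) (w : seq bool) : nat :=
  \sum_(1 <= i < size w) (nth false w i && P w i).

Lemma stat_cat_block P u k : 0 < size u ->
  (forall v i, i < size u -> P (u ++ v) i = P u i) ->
  stat P (u ++ block k) = stat P u + P (u ++ block k) (size u + k).
Proof.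
move=> u_gt0 P_prefix; rewrite /stat size_cat size_block.
rewrite (big_cat_nat _ (n := size u)) ?leq_addr //=; congr (_ + _).
  by apply: eq_big_nat => i /andP [_ hi]; rewrite P_prefix // nth_cat hi.
rewrite -{1}[size u]add0n big_addn addKn big_nat_recr //= big1_seq ?add0n.
  by rewrite addnC nth_cat_block eqxx.
by move=> i; rewrite mem_index_iota addnC nth_cat_block => /andP [_ /ltn_eqF ->].
Qed.

Lemma nth_cat_block_pred u k : 0 < size u ->
  nth false (u ++ block k) (size u + k).-1 = (k == 0) && last false u.
Proof.
case: k => [|k] u_gt0; last by rewrite addnS /= nth_cat_block ltn_eqF.
by rewrite addn0 nth_cat ltn_predL u_gt0 nth_last.
Qed.

Lemma rep_cons x l : rep (x :: l) = (if l is y :: _ then x == y else false) + rep l.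
Proof. by case: l => [|y l]; rewrite /rep; [rewrite !big_geq | rewrite /= big_nat_recl]. Qed.

Lemma stat_true_word_of_part l :
  pos_nonincr l -> stat (fun _ _ => true) (word_of_part l) = size l.
Proof.
elim: l => [|x l IH]; first by rewrite /stat big_geq.
rewrite pos_nonincr_cons => /andP [_ /IH {}IH] /=.
by rewrite stat_cat_block ?size_word_of_part_gt0 ?IH ?addn1.
Qed.

Lemma stat_prev_word_of_part l :
  pos_nonincr l -> stat (fun w i => nth false w i.-1) (word_of_part l) = rep l.
Proof.
elim: l => [|x l IH]; first by rewrite /stat /rep !big_geq.
rewrite pos_nonincr_cons => /andP [hx /IH {}IH] /=.
rewrite stat_cat_block ?size_word_of_part_gt0 //; last first.
  by move=> v i hi; rewrite nth_cat (leq_ltn_trans (leq_pred i) hi).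
rewrite IH rep_cons addnC nth_cat_block_pred ?size_word_of_part_gt0 //.
rewrite last_word_of_part subn_eq0; congr (_ + _).
by case: l {IH} hx => [|y l] /= hx; rewrite ?andbF // andbT eqn_leq hx andbT.
Qed.

Lemma stat_even_word_of_part l : pos_nonincr l ->
  stat (fun w i => ~~ odd (count negb (take i w))) (word_of_part l) = even_parts l.
Proof.
elim: l => [|x l IH]; first by rewrite /stat big_geq.
rewrite pos_nonincr_cons => /andP [hx gl] /=.
rewrite stat_cat_block ?size_word_of_part_gt0 //; last by move=> v i hi; rewrite take_cat hi.
rewrite IH // take_cat_block count_cat count_nseq count_word_of_part // mul1n subnKC //.
by rewrite addnC.
Qed.

Lemma word_of_part_onto_last w : head true w = false -> last false w ->
  exists2 l, pos_nonincr l & word_of_part l = w.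
Proof.
move=> /word_of_part_onto [l [[|k] [gl ->]]]; first by exists l; rewrite ?cats0.
by rewrite last_cat /= (_ : last false (nseq k false) = false) //; elim: k.
Qed.

Lemma inHE n l :
  inH n l = [&& l != [::], pos_nonincr l & head 1 l + size l == n.+1].
Proof. by case: l => [|x l] //; rewrite /inH /is_partition /perimeter /= addnS subn1. Qed.

Lemma inLambdaE n w :
  inLambda n w = [&& size w == n.+1, head true w == false & last false w].
Proof. by rewrite /inLambda nth0; case: eqP => // ws; rewrite -nth_last ws. Qed.

Theorem lemma2p8 (n : nat) (hn : 0 < n) :
  exists f : seq nat -> seq bool,
    [/\ (forall l, inH n l -> inLambda n (f l)),
        {in inH n &, injective f},
        (forall w, inLambda n w -> exists2 l, inH n l & f l = w)
      & (forall l, inH n l ->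
          [/\ ell l = w_ones n (f l),
              rep l = w_double_ones n (f l)
            & even_parts l = w_even_ones n (f l)])].
Proof.
exists word_of_part; split.
- move=> l; rewrite inHE => /and3P [l_nil gl /eqP hs].
  by rewrite inLambdaE size_word_of_part // hs head_word_of_part last_word_of_part l_nil eqxx.
- move=> l1 l2; rewrite -!topredE /= !inHE => /and3P [_ g1 _] /and3P [_ g2 _] e.
  by rewrite -[l1]word_of_partK // -[l2]word_of_partK // e.
- move=> w; rewrite inLambdaE => /and3P [/eqP ws /eqP w0 wlast].
  have [l gl wE] := word_of_part_onto_last w0 wlast.
  exists l => //; rewrite inHE gl -size_word_of_part // wE ws eqxx !andbT.
  by rewrite -last_word_of_part wE.
- move=> l; rewrite inHE => /and3P [_ gl /eqP hs].
  rewrite /ell /w_ones /w_double_ones /w_even_ones -hs -size_word_of_part //.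
  rewrite -(stat_true_word_of_part gl) -(stat_prev_word_of_part gl).
  rewrite -(stat_even_word_of_part gl); split=> //.
  by apply: eq_bigr => i _; rewrite andbT.
Qed.
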